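(* Let $i$ be an integer. Let $\Phi(z)=\sum_{n\ge0}c_nz^n$, where $c_n$ is the number of unbounded Deutsch paths of $n$ steps from $(0,0)$ to $(n,i)$; there is no restriction on the levels visited. Let $v=v(z)$ be the power series with $v(0)=0$ satisfying $z=\frac{v}{1+v+v^2}$. Then $$\Phi(z)=\frac{(1+v)^{-i-2}\,v\,(1+v+v^2)}{1-v}\quad\text{for } i<0,$$ $$\Phi(z)=\frac{v^{i}(1+v+v^2)}{(1-v)(1+v)^{i+2}}\quad\text{for } i\ge0.$$
   Context: A Deutsch path is a lattice path whose steps are up-steps $(1,1)$ and down-steps $(1,-k)$ for any integer $k\ge1$. The series $v$ is given explicitly by $v=\frac{1-z-\sqrt{1-2z-3z^2}}{2z}$. *)

From HB Require Import structures.
From mathcomp Require Import all_boot all_order all_algebra.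
Set Implicit Arguments. Unset Strict Implicit. Unset Printing Implicit Defensive.
Import Order.TTheory GRing.Theory Num.Theory.
Local Open Scope ring_scope.

(** A step of a Deutsch path, recorded by its vertical displacement:
    an up-step (1,1) has displacement 1, a down-step (1,-k) has -k, k >= 1. *)
Definition deutsch_step (s : int) : bool := (s == 1) || (s <= -1).

Definition deutsch_path (n : nat) (i : int) (p : seq int) : bool :=
  [&& size p == n, all deutsch_step p & \sum_(s <- p) s == i].

Definition deutsch_count (n : nat) (i : int) (c : nat) : Prop :=
  exists L : seq (seq int),
    [/\ uniq L, size L = c & forall p, (p \in L) = deutsch_path n i p].

Definition fps := nat -> rat.

Definition fps_const (a : rat) : fps := fun n => if n == 0%N then a else 0.
Definition fps_one : fps := fps_const 1.
Definition fps_X : fps := fun n => if n == 1%N then 1 else 0.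
Definition fps_add (a b : fps) : fps := fun n => a n + b n.
Definition fps_sub (a b : fps) : fps := fun n => a n - b n.
Definition fps_mul (a b : fps) : fps :=
  fun n => \sum_(k < n.+1) a k * b (n - k)%N.
Definition fps_pow (a : fps) (k : nat) : fps := iter k (fps_mul a) fps_one.

(** Multiplicative inverse of a series with nonzero constant term:
    b_0 = 1/a_0, b_n = -(1/a_0) * sum_{k=1}^{n} a_k b_{n-k}.
    [fps_inv_aux a n] is the list [b_0; ...; b_n]. *)
Fixpoint fps_inv_aux (a : fps) (n : nat) : seq rat :=
  match n with
  | 0%N => [:: (a 0%N)^-1]
  | m.+1 => let s := fps_inv_aux a m in
            rcons s (- (a 0%N)^-1 * \sum_(k < m.+1) a k.+1 * nth 0 s (m - k)%N)
  end.
Definition fps_inv (a : fps) : fps := fun n => nth 0 (fps_inv_aux a n) n.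

Definition fps_zpow (a : fps) (k : int) : fps :=
  match k with
  | Posz m => fps_pow a m
  | Negz m => fps_inv (fps_pow a m.+1)
  end.

Definition fps_div (a b : fps) : fps := fps_mul a (fps_inv b).

From HB Require Import structures.
From mathcomp Require Import all_boot all_algebra.
From mathcomp Require Import boolp ring zify.
Set Implicit Arguments. Unset Strict Implicit. Unset Printing Implicit Defensive.
Import GRing.Theory.
Local Open Scope ring_scope.

(* Let G_j count the paths ending at level at least j, so that F_i = G_i - G_(i+1)
   counts those ending at i. Splitting off the first step (an up-step, or a
   down-step -k with k >= 1) gives
     F_i = [i = 0] + z F_(i-1) + z G_(i+1),
   which determines every coefficient of every F_i by induction on the length.
   With w = v/(1+v) and C = (1+v+v^2)/((1-v)(1+v)), the series G_j = C w^j for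
   j >= 0 and G_j = C (1+v)^(-j) for j <= 0 satisfy this recurrence: each case
   reduces to z (1+v+v^2) = v. As G_j = O(z^j), only finitely many down-steps
   contribute to a given coefficient. Expanding G_i - G_(i+1) gives the two
   formulas. *)

(** * The ring of formal power series *)

HB.instance Definition _ := Choice.on fps.

Definition fps_zero : fps := fun=> 0.
Definition fps_opp (a : fps) : fps := fun n => - a n.

Lemma fps_addA : associative fps_add.
Proof. by move=> a b c; apply: funext => n; rewrite /fps_add addrA. Qed.

Lemma fps_addC : commutative fps_add.
Proof. by move=> a b; apply: funext => n; rewrite /fps_add addrC. Qed.

Lemma fps_add0 : left_id fps_zero fps_add.
Proof. by move=> a; apply: funext => n; rewrite /fps_add add0r. Qed.

Lemma fps_addN : left_inverse fps_zero fps_opp fps_add.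
Proof. by move=> a; apply: funext => n; rewrite /fps_add addNr. Qed.

HB.instance Definition _ :=
  GRing.isZmodule.Build fps fps_addA fps_addC fps_add0 fps_addN.

(* Coefficient [n] of a product only involves coefficients up to [n], so the
   ring laws of [fps_mul] follow from those of truncations in [{poly rat}]. *)
Definition fps_trunc (n : nat) (a : fps) : {poly rat} := \poly_(k < n.+1) a k.

Lemma coef_fps_trunc n a j : (j <= n)%N -> (fps_trunc n a)`_j = a j.
Proof. by move=> le_jn; rewrite coef_poly ltnS le_jn. Qed.

Lemma coef_mul_agree n (p q : {poly rat}) (a b : fps) :
    (forall j, (j <= n)%N -> p`_j = a j) ->
    (forall j, (j <= n)%N -> q`_j = b j) ->
  forall j, (j <= n)%N -> (p * q)`_j = fps_mul a b j.
Proof.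
move=> pa qb j le_jn; rewrite coefM; apply: eq_bigr => k _.
have le_kj : (k <= j)%N by rewrite -ltnS.
by rewrite pa ?qb //; [apply: leq_trans (leq_subr k j) le_jn | apply: leq_trans le_jn].
Qed.

Lemma fps_mulA : associative fps_mul.
Proof.
move=> a b c; apply: funext => n.
have ta := @coef_fps_trunc n a.
have tb := @coef_fps_trunc n b; have tc := @coef_fps_trunc n c.
rewrite -(coef_mul_agree ta (coef_mul_agree tb tc)) //.
by rewrite -(coef_mul_agree (coef_mul_agree ta tb) tc) // mulrA.
Qed.

Lemma fps_mulC : commutative fps_mul.
Proof.
move=> a b; apply: funext => n.
have ta := @coef_fps_trunc n a; have tb := @coef_fps_trunc n b.
by rewrite -(coef_mul_agree ta tb) // -(coef_mul_agree tb ta) // mulrC.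
Qed.

Lemma fps_mul1 : left_id fps_one fps_mul.
Proof.
move=> a; apply: funext => n.
have t1 : forall j, (j <= n)%N -> (1 : {poly rat})`_j = fps_one j.
  by move=> j _; rewrite coef1 /fps_one /fps_const; case: (j == 0%N).
by rewrite -(coef_mul_agree t1 (@coef_fps_trunc n a)) // mul1r coef_fps_trunc.
Qed.

Lemma fps_mulDl : left_distributive fps_mul fps_add.
Proof.
move=> a b c; apply: funext => n.
by rewrite /fps_mul /fps_add -big_split; apply: eq_bigr => k _; rewrite mulrDl.
Qed.

Lemma fps_one_neq0 : fps_one != 0.
Proof. by apply/eqP => /(congr1 (fun a : fps => a 0%N)) /eqP; rewrite oner_eq0. Qed.

HB.instance Definition _ :=
  GRing.Zmodule_isComNzRing.Build fps fps_mulA fps_mulC fps_mul1 fps_mulDl fps_one_neq0.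

Lemma fps_coefD (a b : fps) n : (a + b) n = a n + b n. Proof. by []. Qed.
Lemma fps_coefB (a b : fps) n : (a - b) n = a n - b n. Proof. by []. Qed.
Lemma fps_coefM (a b : fps) n : (a * b) n = \sum_(k < n.+1) a k * b (n - k)%N.
Proof. by []. Qed.
Lemma fps_coef0_1 : (1 : fps) 0%N = 1. Proof. by []. Qed.

Lemma fps_coef_sum (I : Type) (r : seq I) (F : I -> fps) n :
  (\sum_(k <- r) F k) n = \sum_(k <- r) F k n.
Proof. by elim: r => [|k r IHr]; rewrite ?big_nil // !big_cons fps_coefD IHr. Qed.

Lemma fps_coef0M (a b : fps) : (a * b) 0%N = a 0%N * b 0%N.
Proof. by rewrite fps_coefM big_ord1. Qed.

Lemma fps_coef0_exp (a : fps) k : (a ^+ k) 0%N = a 0%N ^+ k.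
Proof. by elim: k => // k IHk; rewrite !exprS fps_coef0M IHk. Qed.

Lemma fps_coef_exp_eq0 (a : fps) m k : a 0%N = 0 -> (k < m)%N -> (a ^+ m) k = 0.
Proof.
move=> a0; elim: m k => // m IHm k lt_km; rewrite exprS fps_coefM big1 // => j _.
case: j => [[|j] /= lt_jk]; first by rewrite a0 mul0r.
by rewrite IHm ?mulr0 //; lia.
Qed.

Lemma fps_coef_Xmul (a : fps) n : (fps_X * a) n.+1 = a n.
Proof.
rewrite fps_coefM big_ord_recl big_ord_recl big1 ?addr0 => [|k _].
  by rewrite mul0r add0r mul1r subn1.
by rewrite mul0r.
Qed.

Lemma fps_coef0_Xmul (a : fps) : (fps_X * a) 0%N = 0.
Proof. by rewrite fps_coef0M mul0r. Qed.

Lemma size_fps_inv_aux a n : size (fps_inv_aux a n) = n.+1.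
Proof. by elim: n => //= n IHn; rewrite size_rcons IHn. Qed.

Lemma nth_fps_inv_aux a n k : (k <= n)%N -> nth 0 (fps_inv_aux a n) k = fps_inv a k.
Proof.
elim: n => [|n IHn]; first by rewrite leqn0 => /eqP ->.
rewrite leq_eqVlt => /predU1P [-> //|lt_kn].
by rewrite /= nth_rcons size_fps_inv_aux lt_kn IHn.
Qed.

Lemma fps_inv_succ a m :
  fps_inv a m.+1 = - (a 0%N)^-1 * \sum_(k < m.+1) a k.+1 * fps_inv a (m - k)%N.
Proof.
rewrite /fps_inv /= nth_rcons size_fps_inv_aux ltnn eqxx.
by congr (_ * _); apply: eq_bigr => k _; rewrite nth_fps_inv_aux // leq_subr.
Qed.

Lemma fps_mul_inv a : a 0%N != 0 -> fps_mul a (fps_inv a) = fps_one.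
Proof.
move=> a0; apply: funext => -[|m].
  by rewrite /fps_mul big_ord1 /fps_inv /= divff.
rewrite /fps_mul big_ord_recl subn0 fps_inv_succ mulrA mulrN divff // mulN1r.
by rewrite addNr.
Qed.

Definition fps_unit : pred fps := fun a => a 0%N != 0.
Definition fps_invr (a : fps) : fps := if a 0%N != 0 then fps_inv a else a.

Lemma fps_mulVr : {in fps_unit, left_inverse 1 fps_invr *%R}.
Proof.
by move=> a a0; rewrite /fps_invr (a0 : a 0%N != 0) mulrC; apply: fps_mul_inv.
Qed.

Lemma fps_unitPl (a b : fps) : b * a = 1 -> fps_unit a.
Proof.
move=> /(congr1 (fun c : fps => c 0%N)); rewrite fps_coef0M fps_coef0_1 => ba1.
by apply/eqP => a0; move: ba1; rewrite a0 mulr0 => /eqP; rewrite eq_sym oner_eq0.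
Qed.

Lemma fps_invr_out : {in [predC fps_unit], fps_invr =1 id}.
Proof. by move=> a a0; rewrite /fps_invr ifN. Qed.

HB.instance Definition _ :=
  GRing.ComNzRing_hasMulInverse.Build fps fps_mulVr fps_unitPl fps_invr_out.

Lemma fps_unitE (a : fps) : (a \is a GRing.unit) = (a 0%N != 0).
Proof. by []. Qed.

Lemma fps_invE (a : fps) : a 0%N != 0 -> a^-1 = fps_inv a.
Proof. by move=> a0; rewrite /GRing.inv /= /fps_invr a0. Qed.

Lemma fps_addE (a b : fps) : fps_add a b = a + b. Proof. by []. Qed.
Lemma fps_subE (a b : fps) : fps_sub a b = a - b. Proof. by []. Qed.
Lemma fps_mulE (a b : fps) : fps_mul a b = a * b. Proof. by []. Qed.
Lemma fps_oneE : fps_one = 1. Proof. by []. Qed.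

Lemma fps_powE (a : fps) k : fps_pow a k = a ^+ k.
Proof. by elim: k => // k IHk; rewrite exprS -IHk. Qed.

Lemma fps_divE (a b : fps) : b \is a GRing.unit -> fps_div a b = a / b.
Proof. by move=> b0; rewrite fps_invE. Qed.

Lemma fps_zpow_nat (a : fps) m : fps_zpow a m%:Z = a ^+ m.
Proof. exact: fps_powE. Qed.

Lemma fps_zpowE (a : fps) k : a \is a GRing.unit -> fps_zpow a k = a ^ k.
Proof.
move=> a0; case: k => m; first exact: fps_zpow_nat.
by rewrite /fps_zpow fps_powE -fps_invE // fps_coef0_exp expf_neq0.
Qed.

Lemma fps_unit_1D (a : fps) : a 0%N = 0 -> 1 + a \is a GRing.unit.
Proof. by move=> a0; rewrite fps_unitE fps_coefD a0 addr0 oner_eq0. Qed.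

Lemma fps_unit_1B (a : fps) : a 0%N = 0 -> 1 - a \is a GRing.unit.
Proof. by move=> a0; rewrite fps_unitE fps_coefB a0 subr0 oner_eq0. Qed.

(** * Enumerating Deutsch paths *)

Lemma mem_cons_allpairs (T : eqType) (ts : seq T) (E : T -> seq (seq T)) s p :
  (s :: p \in [seq t :: q | t <- ts, q <- E t]) = (s \in ts) && (p \in E s).
Proof.
apply/allpairsPdep/andP => [[t [q [tsT qE [-> ->]]]] // | [sts pE]].
by exists s, p.
Qed.

Lemma nil_notin_cons_allpairs (T : eqType) (ts : seq T) (E : T -> seq (seq T)) :
  [::] \notin [seq t :: q | t <- ts, q <- E t].
Proof. by apply/allpairsPdep => -[t [q [_ _]]]. Qed.

Lemma deutsch_path_nil n i : deutsch_path n i [::] = (n == 0%N) && (i == 0).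
Proof. by rewrite /deutsch_path /= big_nil [_ == n]eq_sym [_ == i]eq_sym. Qed.

Lemma deutsch_path_cons n i s p :
  deutsch_path n.+1 i (s :: p) = deutsch_step s && deutsch_path n (i - s) p.
Proof.
rewrite /deutsch_path /= big_cons eqSS -(inj_eq (addrI (- s))) addKr addrC.
by case: (size p == n); case: (deutsch_step s).
Qed.

Lemma deutsch_path_le n i p : deutsch_path n i p -> i <= n%:Z.
Proof.
elim: p n i => [|s p IHp] n i.
  by rewrite deutsch_path_nil => /andP [/eqP -> /eqP ->].
case: n => [|n]; first by rewrite /deutsch_path.
rewrite deutsch_path_cons => /andP [/orP [/eqP s1 | sn] /IHp]; lia.
Qed.

(* Paths of [n.+1] steps ending at [i] start with [1] or with [-k], where
   [i + k <= n]; the [|n - i|] candidates [-1, -2, ...] cover all of these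
   (when [n < i] there is no path, whatever the candidates). *)
Definition first_steps (n : nat) (i : int) : seq int :=
  1 :: [seq - k.+1%:Z | k <- iota 0 `|n%:Z - i|].

Lemma mem_first_steps n i s :
  i - s <= n%:Z -> (s \in first_steps n i) = deutsch_step s.
Proof.
move=> le_is_n; rewrite /deutsch_step in_cons; congr (_ || _).
apply/mapP/idP => [[k _ ->] | s_neg]; first by lia.
exists `|s|.-1; last by lia.
by rewrite mem_iota /= -ltz_nat; lia.
Qed.

Lemma uniq_first_steps n i : uniq (first_steps n i).
Proof.
rewrite /= map_inj_uniq ?iota_uniq ?andbT => [|k l]; last by lia.
by apply/mapP => -[k _]; lia.
Qed.

Fixpoint deutsch_paths (n : nat) (i : int) : seq (seq int) :=
  if n is m.+1 then [seq s :: p | s <- first_steps m i, p <- deutsch_paths m (i - s)]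
  else if i == 0 then [:: [::]] else [::].

Lemma deutsch_paths_succ n i : deutsch_paths n.+1 i =
  [seq s :: p | s <- first_steps n i, p <- deutsch_paths n (i - s)].
Proof. by []. Qed.

Lemma mem_deutsch_paths n i p : (p \in deutsch_paths n i) = deutsch_path n i p.
Proof.
elim: n i p => [|n IHn] i [|s p].
- by rewrite deutsch_path_nil /=; case: (i == 0).
- by rewrite /=; case: (i == 0).
- by rewrite deutsch_paths_succ deutsch_path_nil (negbTE (nil_notin_cons_allpairs _ _)).
rewrite deutsch_paths_succ mem_cons_allpairs IHn deutsch_path_cons.
case p_path: (deutsch_path n (i - s) p); rewrite ?andbF ?andbT //.
exact/mem_first_steps/deutsch_path_le/p_path.
Qed.

Lemma uniq_deutsch_paths n i : uniq (deutsch_paths n i).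
Proof.
elim: n i => [|n IHn] i; first by rewrite /=; case: (i == 0).
rewrite deutsch_paths_succ; apply: allpairs_uniq_dep => [|s _|].
- exact: uniq_first_steps.
- exact: IHn.
by move=> [s p] [s' p'] _ _ /= [-> ->].
Qed.

Lemma size_deutsch_paths n i :
  size (deutsch_paths n.+1 i) = (size (deutsch_paths n (i - 1)) +
    \sum_(0 <= k < `|n%:Z - i|) size (deutsch_paths n (i + 1 + k%:Z)))%N.
Proof.
rewrite deutsch_paths_succ size_allpairs_dep /= -map_comp sumnE big_map.
congr (_ + _)%N; rewrite /index_iota subn0; apply: eq_bigr => k _ /=.
by congr (size (deutsch_paths n _)); lia.
Qed.

Lemma deutsch_countE n i c : deutsch_count n i c -> c = size (deutsch_paths n i).
Proof.
move=> [L [uniqL <- memL]]; apply/perm_size/uniq_perm => [//||p].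
  exact: uniq_deutsch_paths.
by rewrite memL mem_deutsch_paths.
Qed.

(** * The generating functions *)

Section DeutschSeries.

Variable v : fps.
Hypothesis v0 : v 0%N = 0.
Hypothesis vX : fps_X * (1 + v + v ^+ 2) = v.

Let unit_1Dv : 1 + v \is a GRing.unit. Proof. exact: fps_unit_1D. Qed.
Let unit_1Bv : 1 - v \is a GRing.unit. Proof. exact: fps_unit_1B. Qed.

Definition deutsch_const : fps := (1 + v + v ^+ 2) / ((1 - v) * (1 + v)).
Definition deutsch_ratio : fps := v / (1 + v).

Local Notation C := deutsch_const.
Local Notation w := deutsch_ratio.

(* [tail_gf j] will be the generating function of the paths ending at level
   at least [j], and [level_gf j] that of the paths ending at level [j]. *)
Definition tail_gf (j : int) : fps :=
  if 0 <= j then C * w ^+ `|j| else C * (1 + v) ^+ `|j|.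

Definition level_gf (j : int) : fps := tail_gf j - tail_gf (j + 1).

Lemma deutsch_constM : C * ((1 - v) * (1 + v)) = 1 + v + v ^+ 2.
Proof. by rewrite divrK // unitrM unit_1Bv unit_1Dv. Qed.

Lemma deutsch_ratioM : w * (1 + v) = v.
Proof. exact: divrK. Qed.

Lemma deutsch_ratioBM : (1 - w) * (1 + v) = 1.
Proof. by rewrite mulrBl mul1r deutsch_ratioM addrK. Qed.

(* As [v = w / (1 - w)], the relation [z (1 + v + v^2) = v] becomes this one. *)
Lemma X_deutsch_ratio : fps_X * (1 - w + w ^+ 2) = w - w ^+ 2.
Proof.
apply: (mulIr (unitrX 2 unit_1Dv)).
transitivity (fps_X * (((1 - w) * (1 + v)) ^+ 2 +
  (w * (1 + v)) * ((1 - w) * (1 + v)) + (w * (1 + v)) ^+ 2)); first by ring.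
rewrite deutsch_ratioM deutsch_ratioBM expr1n mulr1 vX.
transitivity ((w * (1 + v)) * ((1 - w) * (1 + v))); last by ring.
by rewrite deutsch_ratioM deutsch_ratioBM mulr1.
Qed.

Lemma tail_gf_nat m : tail_gf m%:Z = C * w ^+ m.
Proof. by []. Qed.

Lemma tail_gf_Nnat m : tail_gf (- m%:Z) = C * (1 + v) ^+ m.
Proof. by case: m => [|m]; rewrite /tail_gf ?expr0. Qed.

Lemma level_gf_nat m : level_gf m%:Z = C * w ^+ m * (1 - w).
Proof.
rewrite /level_gf (_ : m%:Z + 1 = m.+1%:Z); last by lia.
by rewrite !tail_gf_nat exprS; ring.
Qed.

Lemma level_gf_Nnat m : level_gf (- m.+1%:Z) = C * (1 + v) ^+ m * v.
Proof.
rewrite /level_gf (_ : - m.+1%:Z + 1 = - m%:Z); last by lia.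
by rewrite !tail_gf_Nnat exprS; ring.
Qed.

Lemma level_gf_first_step i :
  level_gf i = (i == 0)%:R + fps_X * level_gf (i - 1) + fps_X * tail_gf (i + 1).
Proof.
case: (intP i) => [|m|m].
- rewrite eqxx mulr1n (_ : 0 - 1 = - 1%:Z) // (_ : 0 + 1 = 1%:Z) //.
  rewrite level_gf_nat level_gf_Nnat tail_gf_nat !expr0 expr1 !mulr1.
  have unitD : (1 - v) * (1 + v) * (1 + v) \is a GRing.unit.
    by rewrite !unitrM unit_1Bv unit_1Dv.
  apply: (mulIr unitD).
  transitivity (C * ((1 - v) * (1 + v)) * ((1 - w) * (1 + v))); first by ring.
  rewrite deutsch_constM deutsch_ratioBM mulr1; symmetry.
  transitivity ((1 - v) * (1 + v) * (1 + v) +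
    fps_X * (C * ((1 - v) * (1 + v))) * (v * (1 + v) + w * (1 + v))); first by ring.
  by rewrite deutsch_constM deutsch_ratioM vX; ring.
- rewrite (_ : (m.+1%:Z == 0) = false); last by lia.
  rewrite (_ : m.+1%:Z - 1 = m%:Z); last by lia.
  rewrite (_ : m.+1%:Z + 1 = m.+2%:Z); last by lia.
  rewrite !level_gf_nat tail_gf_nat add0r !exprS.
  transitivity (C * w ^+ m * (w - w ^+ 2)); first by ring.
  by rewrite -X_deutsch_ratio; ring.
- rewrite (_ : (- m.+1%:Z == 0) = false); last by lia.
  rewrite (_ : - m.+1%:Z - 1 = - m.+2%:Z); last by lia.
  rewrite (_ : - m.+1%:Z + 1 = - m%:Z); last by lia.
  rewrite !level_gf_Nnat tail_gf_Nnat add0r exprS.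
  transitivity (C * (1 + v) ^+ m * (fps_X * (1 + v + v ^+ 2))); last by ring.
  by rewrite vX.
Qed.

Lemma coef_tail_gf_eq0 j n : n%:Z < j -> tail_gf j n = 0.
Proof.
move=> lt_nj; rewrite /tail_gf ifT; last by lia.
rewrite fps_coefM big1 // => k _; rewrite fps_coef_exp_eq0 ?mulr0 //.
  by rewrite /deutsch_ratio fps_coef0M v0 mul0r.
have := ltn_ord k; lia.
Qed.

Lemma tail_gf_telescope j K :
  tail_gf j = \sum_(0 <= k < K) level_gf (j + k%:Z) + tail_gf (j + K%:Z).
Proof.
elim: K => [|K IHK]; first by rewrite big_geq // add0r addr0.
rewrite big_nat_recr //= IHK /level_gf -addrA; congr (_ + _).
by rewrite (_ : j + K.+1%:Z = j + K%:Z + 1) ?subrK //; lia.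
Qed.

Lemma coef_level_gf0 i : level_gf i 0%N = (i == 0)%:R.
Proof.
by rewrite level_gf_first_step !fps_coefD !fps_coef0_Xmul !addr0; case: (i == 0).
Qed.

Lemma coef_level_gf_succ n i : level_gf i n.+1 = level_gf (i - 1) n +
  \sum_(0 <= k < `|n%:Z - i|) level_gf (i + 1 + k%:Z) n.
Proof.
rewrite {1}level_gf_first_step !fps_coefD !fps_coef_Xmul.
rewrite (tail_gf_telescope (i + 1) `|n%:Z - i|) fps_coefD fps_coef_sum.
rewrite coef_tail_gf_eq0 ?addr0; last by lia.
by case: (i == 0); rewrite add0r.
Qed.

Lemma coef_level_gf n i : level_gf i n = (size (deutsch_paths n i))%:R.
Proof.
elim: n i => [|n IHn] i; first by rewrite coef_level_gf0 /=; case: (i == 0).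
rewrite coef_level_gf_succ size_deutsch_paths natrD natr_sum IHn.
by congr (_ + _); apply: eq_bigr => k _; rewrite IHn.
Qed.

Lemma level_gf_nonneg m :
  level_gf m%:Z = v ^+ m * (1 + v + v ^+ 2) / ((1 - v) * (1 + v) ^+ m.+2).
Proof.
have unitD : (1 - v) * (1 + v) ^+ m.+2 \is a GRing.unit.
  by rewrite unitrM unit_1Bv unitrX.
apply: (mulIr unitD); rewrite level_gf_nat divrK //.
transitivity (C * ((1 - v) * (1 + v)) * (w * (1 + v)) ^+ m * ((1 - w) * (1 + v))).
  by rewrite !exprS [in RHS]exprMn; ring.
by rewrite deutsch_constM deutsch_ratioM deutsch_ratioBM mulr1 mulrC.
Qed.

Lemma level_gf_neg m :
  level_gf (- m.+1%:Z) = (1 + v) ^ (m%:Z - 1) * v * (1 + v + v ^+ 2) / (1 - v).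
Proof.
have unitD : (1 - v) * (1 + v) \is a GRing.unit by rewrite unitrM unit_1Bv.
rewrite exprzDr // exprN1 -[(1 + v) ^ m%:Z]/((1 + v) ^+ m) level_gf_Nnat.
apply: (mulIr unitD).
transitivity ((1 + v + v ^+ 2) * (1 + v) ^+ m * v).
  by rewrite -deutsch_constM; ring.
transitivity ((1 + v) ^+ m * v * (1 + v + v ^+ 2) * ((1 + v)^-1 * (1 + v)) *
  ((1 - v)^-1 * (1 - v))); last by ring.
by rewrite !mulVr // !mulr1; ring.
Qed.

End DeutschSeries.

Theorem theorem8 (i : int) (c : nat -> nat) (v : fps) :
  (forall n : nat, deutsch_count n i (c n)) ->
  v 0%N = 0 ->
  fps_X = fps_div v (fps_add (fps_add fps_one v) (fps_pow v 2)) ->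
  let Phi : fps := fun n => ((c n)%:R : rat) in
  (i < 0 ->
     Phi = fps_div
             (fps_mul (fps_mul (fps_zpow (fps_add fps_one v) (- i - 2)) v)
                      (fps_add (fps_add fps_one v) (fps_pow v 2)))
             (fps_sub fps_one v)) /\
  (0 <= i ->
     Phi = fps_div
             (fps_mul (fps_zpow v i) (fps_add (fps_add fps_one v) (fps_pow v 2)))
             (fps_mul (fps_sub fps_one v) (fps_zpow (fps_add fps_one v) (i + 2)))).
Proof.
move=> count v0 X_div Phi.
rewrite !fps_addE fps_oneE !fps_powE !fps_mulE fps_subE in X_div *.
have unit_q : 1 + v + v ^+ 2 \is a GRing.unit.
  by rewrite fps_unitE !fps_coefD fps_coef0_exp v0 expr0n addr0 oner_eq0.
have vX : fps_X * (1 + v + v ^+ 2) = v by rewrite X_div fps_divE // divrK.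
have -> : Phi = level_gf v i.
  by apply: funext => n; rewrite (coef_level_gf v0 vX) -(deutsch_countE (count n)).
have unit_1Bv := fps_unit_1B v0; have unit_1Dv := fps_unit_1D v0.
split; case: i count => m _ // _.
- rewrite fps_divE // fps_zpowE // NegzE (level_gf_neg v0).
  by congr (_ ^ _ * _ * _ / _); lia.
- rewrite (_ : m%:Z + 2 = m.+2%:Z); last by lia.
  rewrite !fps_zpow_nat fps_divE ?(level_gf_nonneg v0) //.
  by rewrite unitrM unit_1Bv unitrX.
Qed.
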